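(* Let $X$ be a real reflexive Banach space, $f:X\to\mathbb{R}\cup\{+\infty\}$ a lower semicontinuous proper convex function, $f^{FY}(x,x^{\ast}):=f(x)+f^{\ast}(x^{\ast})$, and let $h\in\mathcal{H}(\partial f)$ satisfy $h\le f^{FY}$. Then for every $(x,x^{\ast})\in X\times X^{\ast}$, $$h(x,x^{\ast})+h^{\ast}(x^{\ast},x)\ge\langle x,x^{\ast}\rangle+f(x)+f^{\ast}(x^{\ast}).$$
   Context: $X^{\ast}$ is the dual of $X$ with pairing $\langle\cdot,\cdot\rangle$; $f^{\ast}(x^{\ast})=\sup_x\{\langle x,x^{\ast}\rangle-f(x)\}$ and $\partial f$ is the convex subdifferential of $f$. The dual of $X\times X^{\ast}$ is identified with $X^{\ast}\times X$ via $\langle (x,x^{\ast}),(y^{\ast},y)\rangle=\langle x,y^{\ast}\rangle+\langle y,x^{\ast}\rangle$, and $h^{\ast}(y^{\ast},y)=\sup_{(x,x^{\ast})}\{\langle x,y^{\ast}\rangle+\langle y,x^{\ast}\rangle-h(x,x^{\ast})\}$. For a maximally monotone $T$, $\mathcal{H}(T)$ is the family of lower semicontinuous convex $h:X\times X^{\ast}\to\mathbb{R}\cup\{+\infty\}$ with $h(x,x^{\ast})\ge\langle x,x^{\ast}\rangle$ everywhere and equality whenever $x^{\ast}\in T(x)$. *)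

From HB Require Import structures.
From mathcomp Require Import all_boot all_order all_algebra.
From mathcomp Require Import all_classical all_reals all_analysis.
Set Implicit Arguments. Unset Strict Implicit. Unset Printing Implicit Defensive.
Import Order.TTheory GRing.Theory Num.Theory.
Import numFieldNormedType.Exports.
Local Open Scope classical_set_scope.
Local Open Scope ring_scope.
Local Open Scope ereal_scope.

Section Defs.
Variables (R : realType) (X : normedModType R).

(* The topological dual X^*: continuous linear functionals, represented as
   functions X -> R satisfying the predicate [is_dual]. *)
Definition is_dual (xs : X -> R) : Prop :=
  (forall (a : R) (x y : X), xs (a *: x + y)%R = (a * xs x + xs y)%R) /\
  continuous xs.

Definition dual_normle (xs : X -> R) (c : R) : Prop :=
  forall z : X, (`|xs z| <= c * `|z|)%R.

(* Reflexivity: every continuous (= bounded w.r.t. the is_dual norm) linear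
   functional on X^* is the evaluation at some point of X. *)
Definition reflexive_space : Prop :=
  forall phi : (X -> R) -> R,
    (forall (a : R) xs ys, is_dual xs -> is_dual ys ->
        phi (fun z => a * xs z + ys z)%R = (a * phi xs + phi ys)%R) ->
    (exists C : R, forall xs (c : R), is_dual xs -> (0 <= c)%R ->
        dual_normle xs c -> (`|phi xs| <= C * c)%R) ->
    exists x : X, forall xs, is_dual xs -> phi xs = xs x.

Definition no_minfty (f : X -> \bar R) : Prop := forall x, f x != -oo.
Definition proper_fun (f : X -> \bar R) : Prop :=
  no_minfty f /\ exists x, f x < +oo.
Definition convex_fun (f : X -> \bar R) : Prop :=
  forall (x y : X) (t : R), (0 < t < 1)%R ->
    f (t *: x + (1 - t) *: y)%R <= t%:E * f x + (1 - t)%R%:E * f y.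
Definition lsc_fun (f : X -> \bar R) : Prop :=
  forall (x : X) (t : R), t%:E < f x ->
    exists2 d : R, (0 < d)%R & forall y, (`|y - x| < d)%R -> t%:E < f y.

Definition conj_fun (f : X -> \bar R) (xs : X -> R) : \bar R :=
  ereal_sup [set (xs x)%:E - f x | x in [set: X]].

Definition subdiff (f : X -> \bar R) (x : X) (xs : X -> R) : Prop :=
  is_dual xs /\ f x \is a fin_num /\
  forall y : X, f x + (xs (y - x)%R)%:E <= f y.

(* Functions h : X x X^* -> R U {+oo}  (only values at is_dual xs matter) *)
Definition convex_fun2 (h : X -> (X -> R) -> \bar R) : Prop :=
  forall (x y : X) xs ys (t : R), is_dual xs -> is_dual ys -> (0 < t < 1)%R ->
    h (t *: x + (1 - t) *: y)%R (fun z => t * xs z + (1 - t) * ys z)%R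
      <= t%:E * h x xs + (1 - t)%R%:E * h y ys.
Definition lsc_fun2 (h : X -> (X -> R) -> \bar R) : Prop :=
  forall (x : X) xs (t : R), is_dual xs -> t%:E < h x xs ->
    exists2 d : R, (0 < d)%R & forall y ys, is_dual ys ->
      (`|y - x| < d)%R -> dual_normle (fun z => ys z - xs z)%R d ->
      t%:E < h y ys.

(* h^*(ys, y) with the is_dual of X x X^* identified with X^* x X *)
Definition conj_fun2 (h : X -> (X -> R) -> \bar R) (ys : X -> R) (y : X)
  : \bar R :=
  ereal_sup [set e | exists x xs, is_dual xs /\
                     e = (ys x + xs y)%:E - h x xs].

(* the family H(T) for a (maximally monotone) T given as a relation *)
Definition fitzfam (T : X -> (X -> R) -> Prop)
  (h : X -> (X -> R) -> \bar R) : Prop :=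
  convex_fun2 h /\ lsc_fun2 h /\
  (forall x xs, is_dual xs -> (xs x)%:E <= h x xs) /\
  (forall x xs, T x xs -> h x xs = (xs x)%:E).

End Defs.

From HB Require Import structures.
From mathcomp Require Import all_boot all_order all_algebra.
From mathcomp Require Import all_classical all_reals all_analysis.
From mathcomp Require Import ring lra.
Set Implicit Arguments.
Unset Strict Implicit.
Unset Printing Implicit Defensive.
Import Order.TTheory GRing.Theory Num.Theory.
Import numFieldNormedType.Exports.
Local Open Scope classical_set_scope.
Local Open Scope ring_scope.

(* Since h dominates the duality pairing, it suffices to show
   h^*(xs, x) >= f x + f^* xs.  For all y and ys,
   h^*(xs, x) >= xs y + ys x - h y ys >= (xs y - f y) + (ys x - f^* ys),
   and the suprema over y and ys of the two brackets are f^* xs and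
   f^** x = f x.  The equality f^** = f (Fenchel-Moreau) carries the work:
   below any a < f x there is a continuous affine minorant of f with value a
   at x, obtained by separating (x, a) from the epigraph of f in X x R, via
   Hahn-Banach applied to the Minkowski gauge of a neighbourhood of the
   epigraph. *)

Section HahnBanach.
Context {R : realType} {V : lmodType R}.

Definition linear_functional (L : V -> R) :=
  forall a u v, L (a *: u + v) = a * L u + L v.

Lemma linear_functionalB L : linear_functional L ->
  forall u v, L (u - v) = L u - L v.
Proof.
move=> linL u v; have := linL (-1) v u; rewrite scaleN1r addrC => ->.
by rewrite mulN1r addrC.
Qed.

Lemma linear_functional0 L : linear_functional L -> L 0 = 0.
Proof.
by move=> linL; have := linL 1 0 0; rewrite scale1r addr0 mul1r; lra.
Qed.

Lemma linear_functionalN L : linear_functional L -> forall u, L (- u) = - L u.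
Proof.
move=> linL u; have := linear_functionalB linL 0 u.
by rewrite add0r linear_functional0 // sub0r.
Qed.

Lemma linear_functionalZ L : linear_functional L ->
  forall c u, L (c *: u) = c * L u.
Proof.
by move=> linL c u; rewrite -[c *: u]addr0 linL linear_functional0 // addr0.
Qed.

Variable p : V -> R.
Hypothesis p_add : forall u v, p (u + v) <= p u + p v.
Hypothesis p_hom : forall t v, 0 <= t -> p (t *: v) = t * p v.

(* A linear functional on a subspace, dominated by [p], encoded by its graph. *)
Definition dominated_graph (G : set (V * R)) :=
  [/\ G (0, 0), (forall u r s, G (u, r) -> G (u, s) -> r = s),
      (forall a u v r s, G (u, r) -> G (v, s) -> G (a *: u + v, a * r + s)) &
      (forall u r, G (u, r) -> r <= p u)].

Lemma dominated_graphZ G a u r :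
  dominated_graph G -> G (u, r) -> G (a *: u, a * r).
Proof.
by case=> G0 _ GD _ Gur; have := GD a u 0 r 0 Gur G0; rewrite !addr0.
Qed.

Lemma dominated_graph_gap G v : dominated_graph G ->
  exists c, forall u r, G (u, r) -> r - p (u - v) <= c /\ c <= p (u + v) - r.
Proof.
move=> [G0 _ GD Gp].
have gap u1 r1 u2 r2 : G (u1, r1) -> G (u2, r2) ->
    r1 - p (u1 - v) <= p (u2 + v) - r2.
  move=> G1 G2; have := Gp _ _ (GD 1 _ _ _ _ G1 G2); rewrite scale1r mul1r.
  have -> : u1 + u2 = (u1 - v) + (u2 + v) by rewrite addrA (addrAC u1) subrK.
  by have := p_add (u1 - v) (u2 + v); lra.
pose lower := [set x | exists u r, G (u, r) /\ x = r - p (u - v)].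
have lower_ub u r : G (u, r) -> ubound lower (p (u + v) - r).
  by move=> Gur _ [u1 [r1 [G1 ->]]]; exact: gap.
exists (sup lower) => u r Gur; split; last first.
  by apply: ge_sup (lower_ub _ _ Gur); exists (0 - p (0 - v)), 0, 0.
apply: sup_upper_bound; last by exists u, r.
split; first by exists (r - p (u - v)), u, r.
by exists (p (0 + v) - 0); exact: lower_ub.
Qed.

Definition graph_extension G v c : set (V * R) :=
  [set z | exists u r t, G (u, r) /\ z = (u + t *: v, r + t * c)].

Lemma graph_extension_dominated G v c : dominated_graph G ->
  (forall u r, G (u, r) -> r - p (u - v) <= c /\ c <= p (u + v) - r) ->
  forall u r t, G (u, r) -> r + t * c <= p (u + t *: v).
Proof.
move=> gG gap u r t Gur.
have [t_gt0|t_lt0|<-] := ltgtP 0 t; last first.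
- by rewrite scale0r mul0r !addr0; case: gG => _ _ _; apply.
- have s_gt0 : 0 < - t by rewrite oppr_gt0.
  have := (gap _ _ (dominated_graphZ (- t)^-1 gG Gur)).1.
  have -> : (- t)^-1 *: u - v = (- t)^-1 *: (u + t *: v).
    by rewrite scalerDr scalerA invrN mulNr mulVf ?lt_eqF // scaleN1r.
  rewrite p_hom; last by rewrite invr_ge0 ltW.
  by rewrite -mulrBr ler_pdivrMl //; lra.
- have := (gap _ _ (dominated_graphZ t^-1 gG Gur)).2.
  have -> : t^-1 *: u + v = t^-1 *: (u + t *: v).
    by rewrite scalerDr scalerA mulVf ?gt_eqF // scale1r.
  rewrite p_hom; last by rewrite invr_ge0 ltW.
  by rewrite -mulrBr ler_pdivlMl //; lra.
Qed.

Lemma dominated_graph_extend G v : dominated_graph G ->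
  ~ (exists r, G (v, r)) -> exists2 G', dominated_graph G' & G `<` G'.
Proof.
move=> gG Gv; have [c gap] := dominated_graph_gap v gG.
have [G0 Gfun GD Gp] := gG.
exists (graph_extension G v c); last first.
  rewrite /proper; split=> [[u r] Gur|sub].
    by exists u, r, 0; split=> //; rewrite scale0r mul0r !addr0.
  apply: Gv; exists (0 + 1 * c); apply: sub.
  by exists 0, 0, 1; split=> //; rewrite scale1r !add0r.
split.
- by exists 0, 0, 0; split=> //; rewrite scale0r mul0r !addr0.
- move=> _ r s [u1 [r1 [t1 [G1 [-> ->]]]]] [u2 [r2 [t2 [G2 [e ->]]]]].
  case: (eqVneq t1 t2) e => [<-|t12] e.
    by move: G2; rewrite -(addIr _ e) => G2; rewrite (Gfun _ _ _ G1 G2).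
  exfalso; apply: Gv; exists ((t1 - t2)^-1 * (-1 * r1 + r2)).
  have -> : v = (t1 - t2)^-1 *: (-1 *: u1 + u2).
    apply: (scalerI (a := t1 - t2)); first by rewrite subr_eq0.
    rewrite scalerKV ?subr_eq0 // scaleN1r addrC -[u2](addrK (t2 *: v)) -e.
    by rewrite addrA addKr scalerDl scaleNr addrC.
  by apply: (dominated_graphZ _ gG); apply: GD.
- move=> a _ _ _ _ [u1 [r1 [t1 [G1 [-> ->]]]]] [u2 [r2 [t2 [G2 [-> ->]]]]].
  exists (a *: u1 + u2), (a * r1 + r2), (a * t1 + t2); split; first exact: GD.
  by congr pair; [rewrite scalerDr scalerDl scalerA addrACA | ring].
- move=> _ _ [u [r [t [Gur [-> ->]]]]].
  exact: graph_extension_dominated gG gap _ _ _ Gur.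
Qed.

Lemma dominated_graph_bigcup (F : set (set (V * R))) :
  F !=set0 -> F `<=` dominated_graph -> total_on F subset ->
  dominated_graph (\bigcup_(G in F) G).
Proof.
move=> [G1 FG1] Fg Ftot; split.
- by exists G1 => //; case: (Fg _ FG1).
- move=> u r s [G2 FG2 G2r] [G3 FG3 G3s].
  have [sub|sub] := Ftot _ _ FG2 FG3.
    by case: (Fg _ FG3) => _ Gfun _ _; apply: Gfun (sub _ G2r) G3s.
  by case: (Fg _ FG2) => _ Gfun _ _; apply: Gfun G2r (sub _ G3s).
- move=> a u v r s [G2 FG2 G2r] [G3 FG3 G3s].
  have [sub|sub] := Ftot _ _ FG2 FG3.
    by exists G3 => //; case: (Fg _ FG3) => _ _ GD _; apply: GD (sub _ G2r) G3s.
  by exists G2 => //; case: (Fg _ FG2) => _ _ GD _; apply: GD G2r (sub _ G3s).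
- by move=> u r [G2 FG2 G2r]; case: (Fg _ FG2) => _ _ _; apply.
Qed.

Lemma hahn_banach G0 : dominated_graph G0 ->
  exists L, [/\ linear_functional L, forall u, L u <= p u &
                forall u r, G0 (u, r) -> L u = r].
Proof.
move=> gG0.
(* [set0] is admitted so that the empty chain has an upper bound. *)
pose P := [set G | G = set0 \/ dominated_graph G /\ G0 `<=` G].
have [F FP Ftot|G [PG Gmax]] := @Zorn_bigcup _ P.
  pose F' := [set G | F G /\ G !=set0].
  have F'F : \bigcup_(G in F') G = \bigcup_(G in F) G.
    apply/seteqP; split=> z [G FG Gz]; exists G => //; first by case: FG.
    by split => //; exists z.
  have [[G1 F'G1]|F'0] := pselect (F' !=set0); last first.
    left; rewrite -F'F; apply/seteqP; split => // z [G FG Gz].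
    by apply: F'0; exists G.
  have F'g G : F' G -> dominated_graph G /\ G0 `<=` G.
    by move=> [/FP [->|//] [w []]].
  right; rewrite -F'F; split; last first.
    by move=> w G0w; exists G1 => //; apply: (F'g _ F'G1).2.
  apply: dominated_graph_bigcup => [|G /F'g []//|G2 G3 [F2 _] [F3 _]].
    by exists G1.
  exact: Ftot.
have [gG G0G] : dominated_graph G /\ G0 `<=` G.
  case: PG => // G_0; exfalso; apply: (Gmax G0); last by right; split.
  by rewrite G_0 /proper; split => // sub; case: gG0 => /sub.
have Gtot v : exists r, G (v, r).
  apply: contrapT => Gv; have [G' gG' GG'] := dominated_graph_extend gG Gv.
  by apply: (Gmax G' GG'); right; split => //; apply: subset_trans GG'.1.
have [L GL] := choice Gtot; have [_ Gfun GD Gp] := gG.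
exists L; split.
- by move=> a u v; apply: (Gfun _ _ _ (GL _)); apply: GD.
- by move=> u; apply: Gp.
- by move=> u r G0ur; apply: (Gfun _ _ _ (GL _)); apply: G0G.
Qed.

End HahnBanach.

Section MinkowskiGauge.
Context {R : realType} {V : lmodType R} (C : set V) (N : V -> R).
Hypothesis C_convex : forall u v t, C u -> C v -> 0 < t < 1 ->
  C (t *: u + (1 - t) *: v).
Hypothesis N_ge0 : forall v, 0 <= N v.
Hypothesis N0 : N 0 = 0.
Hypothesis C_absorbing : forall v l, 0 < l -> N v < l -> C (l^-1 *: v).

Definition gauge v := inf [set l | 0 < l /\ C (l^-1 *: v)].

Let gauge_set_neq0 v : [set l | 0 < l /\ C (l^-1 *: v)] !=set0.
Proof.
have Nv_ge0 := N_ge0 v.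
by exists (N v + 1); split; [|apply: C_absorbing]; lra.
Qed.

Let gauge_set_lbound v : has_lbound [set l | 0 < l /\ C (l^-1 *: v)].
Proof. by exists 0 => l [/ltW]. Qed.

Lemma gauge_ge0 v : 0 <= gauge v.
Proof. by apply: lb_le_inf => // l [/ltW]. Qed.

Lemma gauge_le v l : 0 < l -> C (l^-1 *: v) -> gauge v <= l.
Proof. by move=> l_gt0 Cl; apply: ge_inf => //; split. Qed.

Lemma gauge_le1 v : C v -> gauge v <= 1.
Proof. by move=> Cv; apply: gauge_le; rewrite ?invr1 ?scale1r. Qed.

Lemma gauge_leN v : gauge v <= N v.
Proof.
apply/ler_addgt0Pr => e e_gt0; have Nv_ge0 := N_ge0 v.
by apply: gauge_le; [|apply: C_absorbing]; lra.
Qed.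

Lemma gauge0 : gauge 0 = 0.
Proof. by apply/le_anti; rewrite gauge_ge0 andbT -N0 gauge_leN. Qed.

Let C0 : C 0.
Proof. by have := @C_absorbing 0 1 ltr01; rewrite N0 scaler0; apply. Qed.

(* [C] is star-shaped around [0], so its dilates increase. *)
Let C_dilate v l l' : 0 < l -> l <= l' -> C (l^-1 *: v) -> C (l'^-1 *: v).
Proof.
move=> l_gt0; rewrite le_eqVlt => /predU1P [<-//|ll'] Cl.
have l'_gt0 : 0 < l' by apply: lt_trans ll'.
have := @C_convex _ _ (l / l') Cl C0; rewrite scaler0 addr0 scalerA.
rewrite mulrAC divff ?gt_eqF // mul1r; apply.
by rewrite divr_gt0 //= ltr_pdivrMr // mul1r.
Qed.

Lemma gauge_lt1 v : gauge v < 1 -> C v.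
Proof.
move=> /(inf_lt (gauge_set_neq0 v)) [l [l_gt0 Cl] l_lt1].
by have := C_dilate l_gt0 (ltW l_lt1) Cl; rewrite invr1 scale1r.
Qed.

Let gauge_homle t v : 0 < t -> gauge (t *: v) <= t * gauge v.
Proof.
move=> t_gt0; rewrite -ler_pdivrMl //; apply: lb_le_inf => // l [l_gt0 Cl].
rewrite ler_pdivrMl //; apply: gauge_le; first by rewrite mulr_gt0.
by rewrite scalerA invfM mulrAC mulVf ?gt_eqF // mul1r.
Qed.

Lemma gauge_hom t v : 0 <= t -> gauge (t *: v) = t * gauge v.
Proof.
rewrite le_eqVlt => /predU1P [<-|t_gt0]; first by rewrite scale0r mul0r gauge0.
apply/le_anti; rewrite gauge_homle //=.
have := @gauge_homle t^-1 (t *: v); rewrite invr_gt0 scalerA mulVf ?gt_eqF //.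
by rewrite scale1r -ler_pdivrMl ?invr_gt0 // invrK mulrC => ->.
Qed.

Lemma gauge_subadd u v : gauge (u + v) <= gauge u + gauge v.
Proof.
have gauge_sum l k : 0 < l -> C (l^-1 *: u) -> 0 < k -> C (k^-1 *: v) ->
    gauge (u + v) <= l + k.
  move=> l_gt0 Cl k_gt0 Ck; have lk_gt0 : 0 < l + k by rewrite addr_gt0.
  apply: gauge_le => //; have := @C_convex _ _ (l / (l + k)) Cl Ck.
  have -> : 1 - l / (l + k) = k / (l + k) by field; rewrite gt_eqF.
  have inv_lk m : 0 < m -> m / (l + k) * m^-1 = (l + k)^-1.
    by move=> m_gt0; rewrite mulrAC divff ?gt_eqF // mul1r.
  rewrite !scalerA !inv_lk // -scalerDr; apply.
  by rewrite divr_gt0 //= ltr_pdivrMr // mul1r ltrDl.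
have gauge_sum_inf k : 0 < k -> C (k^-1 *: v) -> gauge (u + v) - k <= gauge u.
  move=> k_gt0 Ck; apply: lb_le_inf => // l [l_gt0 Cl].
  by have := gauge_sum _ _ l_gt0 Cl k_gt0 Ck; lra.
have : gauge (u + v) - gauge u <= gauge v.
  apply: lb_le_inf => // k [k_gt0 Ck].
  by have := gauge_sum_inf _ k_gt0 Ck; lra.
by rewrite lerBlDl addrC.
Qed.

(* Hahn-Banach applied to the line through [w], where [L w = gauge w]. *)
Lemma gauge_separation w : ~ C w -> exists L, [/\ linear_functional L,
    forall c, C c -> L c <= 1, 1 <= L w & forall v, L v <= N v].
Proof.
move=> Cw.
pose G := [set z | exists t, z = (t *: w, t * gauge w)].
have gG : dominated_graph gauge G.
  split.
  - by exists 0; rewrite scale0r mul0r.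
  - move=> u r s [t1 [-> ->]] [t2 [e ->]].
    have [<-//|t12] := eqVneq t1 t2.
    have /eqP : (t1 - t2) *: w = 0 by rewrite scalerBl e subrr.
    rewrite scaler_eq0 subr_eq0 (negbTE t12) /= => /eqP ->.
    by rewrite gauge0 !mulr0.
  - move=> a u v r s [t1 [-> ->]] [t2 [-> ->]]; exists (a * t1 + t2).
    by rewrite scalerDl scalerA mulrDl mulrA.
  - move=> u r [t [-> ->]]; have [t_ge0|t_lt0] := leP 0 t.
      by rewrite gauge_hom.
    by have := gauge_ge0 w; have := gauge_ge0 (t *: w); nra.
have [L [linL Lle LG]] := hahn_banach gauge_subadd gauge_hom gG.
exists L; split => //.
- by move=> c Cc; apply: le_trans (Lle c) (gauge_le1 Cc).
- have -> : L w = gauge w.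
    by apply: LG; exists 1; rewrite scale1r mul1r.
  by rewrite leNgt; apply/negP => /gauge_lt1.
- by move=> v; apply: le_trans (Lle v) (gauge_leN v).
Qed.

End MinkowskiGauge.

Section Epigraph.
Context {R : realType} {X : normedModType R}.
Local Notation V := (X * R^o)%type.

Definition bounded_linear (phi : X -> R) :=
  linear_functional phi /\ exists K, forall y, `|phi y| <= K * `|y|.

Lemma bounded_linear_dual phi : bounded_linear phi -> is_dual phi.
Proof.
move=> [linphi [K phiK]]; split => // x.
apply/cvgrPdist_lt => e e_gt0.
have K1_gt0 : 0 < `|K| + 1 by rewrite ltr_pwDr.
apply/nbhs_normP; exists (e / (`|K| + 1)) => /=; first by rewrite divr_gt0.
move=> y /= xy; rewrite -(linear_functionalB linphi).
apply: le_lt_trans (phiK _) _.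
apply: le_lt_trans (_ : (`|K| + 1) * `|x - y| < e).
  by apply: ler_wpM2r => //; have := ler_norm K; lra.
by rewrite mulrC -ltr_pdivlMr.
Qed.

Lemma bounded_linearZ c phi :
  bounded_linear phi -> bounded_linear (fun z => c * phi z).
Proof.
move=> [linphi [K phiK]]; split; first by move=> a u v; rewrite linphi; ring.
by exists (`|c| * K) => y; rewrite normrM -mulrA ler_wpM2l.
Qed.

Lemma bounded_linearD phi psi : bounded_linear phi -> bounded_linear psi ->
  bounded_linear (fun z => phi z + psi z).
Proof.
move=> [linphi [K phiK]] [linpsi [K' psiK]].
split; first by move=> a u v; rewrite linphi linpsi; ring.
exists (K + K') => y; rewrite mulrDl; apply: le_trans (ler_normD _ _) _.
exact: lerD.
Qed.

Lemma proper_fun_finite (f : X -> \bar R) : proper_fun f ->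
  exists x t, f x = t%:E.
Proof.
by move=> [fN [x fx]]; exists x, (fine (f x)); move: fx (fN x); case: (f x).
Qed.

Variable f : X -> \bar R.
Hypothesis f_proper : proper_fun f.
Hypothesis f_convex : convex_fun f.
Hypothesis f_lsc : lsc_fun f.

Local Notation epigraph := [set e : V | (f e.1 <= e.2%:E)%E].

Lemma epigraph_convex (e e' : V) s : epigraph e -> epigraph e' -> 0 < s < 1 ->
  epigraph (s *: e + (1 - s) *: e').
Proof.
move=> fe fe' s01; have /andP [s_gt0 s_lt1] := s01.
apply: le_trans (f_convex _ _ s01) _.
have -> : (s *: e + (1 - s) *: e').2 = s * e.2 + (1 - s) * e'.2 by [].
rewrite (EFinD (s * e.2)) (EFinM s) (EFinM (1 - s)).
by apply: leeD; apply: lee_wpmul2l => //; rewrite lee_fin ?subr_ge0 ltW.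
Qed.

Lemma epigraph_far x a : (a%:E < f x)%E -> exists2 rho, 0 < rho &
  forall e : V, epigraph e -> rho <= `|((x, a) : V) - e|.
Proof.
move=> afx.
have [delta delta_gt0 adelta] :
    exists2 delta, 0 < delta & ((a + delta)%:E < f x)%E.
  case: (f x) (f_proper.1 x) afx => [r _| _ _|//]; last first.
    by exists 1; rewrite ?ltry.
  by rewrite lte_fin => ar; exists ((r - a) / 2); rewrite ?lte_fin; lra.
have [d d_gt0 near_x] := f_lsc adelta.
exists (Num.min d delta) => [|e fe]; first by rewrite lt_min d_gt0.
rewrite leNgt prod_normE gt_max !lt_min /=.
apply/negP => /andP [/andP [xe _] /andP [_ ae]].
have : ((a + delta)%:E < f e.1)%E by apply: near_x; rewrite distrC.
move=> /lt_le_trans /(_ fe); rewrite lte_fin.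
by move: ae; rewrite ltr_norml => /andP []; lra.
Qed.

Definition epigraph_nbhd (e0 : V) (r : R) : set V :=
  [set v | exists e b, [/\ epigraph e, `|b| < r & v = e - e0 + b]].

Lemma epigraph_nbhd_convex e0 r u v t :
  epigraph_nbhd e0 r u -> epigraph_nbhd e0 r v -> 0 < t < 1 ->
  epigraph_nbhd e0 r (t *: u + (1 - t) *: v).
Proof.
move=> [e [b [fe br ->]]] [e' [b' [fe' b'r ->]]] t01.
have /andP [t_gt0 t_lt1] := t01.
exists (t *: e + (1 - t) *: e'), (t *: b + (1 - t) *: b'); split.
- exact: epigraph_convex.
- apply: le_lt_trans (ler_normD _ _) _.
  by rewrite !normrZ !ger0_norm ?subr_ge0 ?ltW //; nra.
- rewrite !scalerDr !scalerN addrACA; congr (_ + _); rewrite addrACA.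
  by rewrite -opprD -scalerDl subrKC scale1r.
Qed.

Lemma epigraph_nbhd_absorbing e0 r v l : epigraph e0 -> 0 < r ->
  0 < l -> `|v| / r < l -> epigraph_nbhd e0 r (l^-1 *: v).
Proof.
move=> fe0 r_gt0 l_gt0 vrl; exists e0, (l^-1 *: v); split => //.
- rewrite normrZ gtr0_norm ?invr_gt0 // mulrC ltr_pdivrMr //.
  by rewrite -ltr_pdivrMl // mulrC.
- by rewrite subrr add0r.
Qed.

Lemma epigraph_strict_separation x a : (a%:E < f x)%E -> exists L eta,
  [/\ linear_functional L, exists K, forall v : V, L v <= K * `|v|, 0 < eta &
       forall e, epigraph e -> L e + eta <= L (x, a)].
Proof.
move=> afx; have [rho rho_gt0 far] := epigraph_far afx.
have [x1 [t1 fx1]] := proper_fun_finite f_proper.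
pose e0 : V := (x1, t1); pose p0 : V := (x, a); pose w := p0 - e0.
have fe0 : epigraph e0 by rewrite /= fx1.
pose r := rho / 2; have r_gt0 : 0 < r by rewrite divr_gt0.
have rho_2r : rho = 2 * r by rewrite /r mulrC divfK.
clearbody r.
pose s := r / (`|w| + 2 * r); have w_ge0 := normr_ge0 w.
have s_gt0 : 0 < s by rewrite divr_gt0 //; lra.
have s_lt1 : s < 1 by rewrite ltr_pdivrMr; lra.
have sw_lt_r : s * `|w| < r.
  by rewrite mulrAC ltr_pdivrMr; [nra | lra].
clearbody s.
(* Shrinking [w] by [1 - s] makes the separation strict: otherwise
   [p0 - e = b + s *: w] for some [e] in the epigraph, of norm [< rho]. *)
have Cw : ~ epigraph_nbhd e0 r ((1 - s) *: w).
  move=> [e [b [fe b_lt_r ew]]].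
  have pe : p0 - e = b + s *: w.
    have -> : e = (1 - s) *: w - b + e0 by rewrite ew addrK subrK.
    rewrite scalerBl scale1r !opprD !opprK /w.
    by rewrite !addrA addrN add0r (addrAC _ b) (addrC e0) addrK addrC.
  have := far e fe; rewrite pe => /le_trans /(_ (ler_normD _ _)).
  by rewrite normrZ gtr0_norm //; lra.
have N_ge0 (v : V) : 0 <= `|v| / r by rewrite divr_ge0 // ltW.
have N0 : `|0 : V| / r = 0 by rewrite normr0 mul0r.
have [L [linL LC Lw LN]] := gauge_separation (@epigraph_nbhd_convex e0 r)
  N_ge0 N0 (fun v l => epigraph_nbhd_absorbing fe0 r_gt0) Cw.
exists L, s; split => //; first by exists r^-1 => v; rewrite mulrC.
move=> e fe; have L_le1 : L (e - e0) <= 1.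
  by apply: LC; exists e, 0; rewrite normr0 addr0.
rewrite linear_functionalB // in L_le1.
rewrite linear_functionalZ // linear_functionalB // in Lw.
have : 1 <= L p0 - L e0 by nra.
by rewrite /p0; nra.
Qed.

Lemma epigraph_separation x a : (a%:E < f x)%E -> exists phi beta eta,
  [/\ bounded_linear phi, 0 < eta & forall y t, (f y <= t%:E)%E ->
      phi y + beta * t + eta <= phi x + beta * a].
Proof.
move=> /epigraph_strict_separation [L [eta [linL [K LK] eta_gt0 sepL]]].
pose phi y := L (y, 0); pose beta := L (0, 1).
have Ldec y t : L (y, t) = phi y + beta * t.
  have -> : ((y, t) : V) = t *: (0, 1) + (y, 0).
    by congr pair; rewrite /= ?scaler0 ?add0r ?addr0 // /GRing.scale /= mulr1.
  by rewrite linL addrC mulrC.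
exists phi, beta, eta; split => //; last first.
  by move=> y t fyt; rewrite -!Ldec; apply: sepL.
have linphi : linear_functional phi.
  move=> c u v; rewrite /phi -linL; congr L.
  by rewrite [RHS]surjective_pairing /= /GRing.scale /= mulr0 addr0.
have phi_le y : phi y <= K * `|y|.
  by apply: le_trans (LK _) _; rewrite prod_normE /= normr0 max_l.
split => //; exists K => y; rewrite ler_norml phi_le andbT.
by have := phi_le (- y); rewrite normrN linear_functionalN //; lra.
Qed.

Lemma separation_minorant x a phi beta eta :
  bounded_linear phi -> beta < 0 -> 0 <= eta ->
  (forall y t, (f y <= t%:E)%E -> phi y + beta * t + eta <= phi x + beta * a) ->
  forall y, ((a + (- beta)^-1 * phi (y - x))%:E <= f y)%E.
Proof.
move=> [linphi _] beta_lt0 eta_ge0 sep y; have nbeta_gt0 : 0 < - beta by lra.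
case fy: (f y) => [t| |]; last 2 first.
- by rewrite leey.
- by have := f_proper.1 y; rewrite fy.
have := sep y t; rewrite fy lexx => /(_ isT) le_t.
rewrite lee_fin -(ler_pM2l nbeta_gt0) mulrDr mulrA mulfV ?gt_eqF // mul1r.
by rewrite linear_functionalB //; lra.
Qed.

Lemma affine_minorant x a : (a%:E < f x)%E ->
  exists ys, bounded_linear ys /\ forall y, ((a + ys (y - x))%:E <= f y)%E.
Proof.
move=> afx; have [x1 [t1 fx1]] := proper_fun_finite f_proper.
have [phi [beta [eta [phi_bl eta_gt0 sep]]]] := epigraph_separation afx.
have [linphi _] := phi_bl.
(* The epigraph contains the points [(x1, t)] for arbitrarily large [t]. *)
have beta_le0 : beta <= 0.
  rewrite leNgt; apply/negP => beta_gt0.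
  pose D := phi x + beta * a - phi x1 - beta * t1.
  have fx1_le : (f x1 <= (t1 + `|D| / beta)%:E)%E.
    by rewrite fx1 lee_fin lerDl divr_ge0 // ltW.
  have := sep _ _ fx1_le; rewrite mulrDr mulrCA mulfV ?gt_eqF // mulr1.
  by have := ler_norm D; rewrite /D; lra.
have [beta_lt0|beta_ge0] := ltP beta 0.
  exists (fun z => (- beta)^-1 * phi z); split; first exact: bounded_linearZ.
  exact: separation_minorant phi_bl beta_lt0 (ltW eta_gt0) sep.
(* If [beta = 0], tilt by the minorant obtained below the value [f x1]. *)
have beta0 : beta = 0 by apply/le_anti; rewrite beta_le0.
have t1fx1 : ((t1 - 1)%:E < f x1)%E by rewrite fx1 lte_fin; lra.
have [phi1 [beta1 [eta1 [phi1_bl eta1_gt0 sep1]]]] := epigraph_separation t1fx1.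
have beta1_lt0 : beta1 < 0.
  by have := sep1 x1 t1; rewrite fx1 lexx => /(_ isT); lra.
pose ys1 z := (- beta1)^-1 * phi1 z.
have ys1_bl : bounded_linear ys1 by exact: bounded_linearZ.
have ys1_minor := separation_minorant phi1_bl beta1_lt0 (ltW eta1_gt0) sep1.
pose D := a - (t1 - 1 + ys1 (x - x1)).
pose lam := `|D| / eta.
have lam_ge0 : 0 <= lam by rewrite divr_ge0 // ltW.
have lam_eta : lam * eta = `|D| by rewrite divfK ?gt_eqF.
exists (fun z => ys1 z + lam * phi z); split.
  by apply: bounded_linearD => //; apply: bounded_linearZ.
move=> y; case fy: (f y) => [t| |]; last 2 first.
- by rewrite leey.
- by have := f_proper.1 y; rewrite fy.
have := sep y t; rewrite fy lexx beta0 !mul0r !addr0 => /(_ isT) le_phi.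
have := ys1_minor y; rewrite fy lee_fin -/(ys1 (y - x1)) => le_ys1.
have [linys1 _] := ys1_bl.
rewrite lee_fin !(linear_functionalB linys1) (linear_functionalB linphi).
rewrite (linear_functionalB linys1) in le_ys1.
have : lam * (phi y - phi x) <= - (lam * eta).
  by rewrite -mulrN ler_wpM2l //; lra.
by have := ler_norm D; rewrite -lam_eta /D (linear_functionalB linys1); lra.
Qed.

End Epigraph.

Local Open Scope ereal_scope.

Lemma le_adde_approx {R : realType} (u v z : \bar R) : u != -oo -> v != -oo ->
  (forall a b : R, a%:E < u -> b%:E < v -> (a + b)%:E <= z) -> u + v <= z.
Proof.
move=> uN vN uvz.
have below (w : \bar R) : w != -oo -> exists c : R, c%:E < w.
  case: w => [w _| _|//]; last by exists 0%R; exact: ltry.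
  by exists (w - 1)%R; rewrite lte_fin; lra.
have [a0 a0u] := below u uN; have [b0 b0v] := below v vN.
case: z uvz => [z| |] uvz; [|by rewrite leey|by have := uvz _ _ a0u b0v].
case: u uN a0u uvz => [u _ a0u| _ _|//] uvz; last first.
  have := uvz (z - b0 + 1)%R b0 (ltry _) b0v.
  by rewrite lee_fin addrAC subrK gerDl ler10.
case: v vN b0v uvz => [v _ b0v| _ _|//] uvz; last first.
  have := uvz a0 (z - a0 + 1)%R a0u (ltry _).
  by rewrite lee_fin addrA subrKC gerDl ler10.
rewrite -EFinD lee_fin; apply/ler_addgt0Pr => e e_gt0.
have := uvz (u - e / 2)%R (v - e / 2)%R; rewrite !lte_fin lee_fin.
by clear -e_gt0; lra.
Qed.

Section Conjugate.
Context {R : realType} {X : normedModType R}.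
Variable f : X -> \bar R.
Hypothesis f_proper : proper_fun f.

Lemma conj_fun_neq_ninfty ys : conj_fun f ys != -oo.
Proof.
have [x [t fx]] := proper_fun_finite f_proper.
have : (ys x)%:E - f x <= conj_fun f ys by apply: ereal_sup_ubound; exists x.
by rewrite fx -EFinB; apply: contraTneq => ->.
Qed.

Lemma conj_fun_le_minorant ys x a : linear_functional ys ->
  (forall y, (a + ys (y - x))%:E <= f y) -> conj_fun f ys <= (ys x - a)%:E.
Proof.
move=> linys minor; apply: ge_ereal_sup => _ [y _ <-].
have := minor y; case: (f y) => [t| |] //=; last by rewrite addeNy leNye.
by rewrite -EFinD !lee_fin (linear_functionalB linys); lra.
Qed.

Hypothesis f_convex : convex_fun f.
Hypothesis f_lsc : lsc_fun f.

Lemma fenchel_sum_le_conj_fun2 (h : X -> (X -> R) -> \bar R) x xs :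
  (forall y ys, is_dual ys -> h y ys <= f y + conj_fun f ys) ->
  f x + conj_fun f xs <= conj_fun2 h xs x.
Proof.
move=> h_le; apply: le_adde_approx.
- exact: f_proper.1.
- exact: conj_fun_neq_ninfty.
move=> a b afx bfs.
have [ys [ys_bl ys_minor]] := affine_minorant f_proper f_convex f_lsc afx.
have [linys _] := ys_bl; have dys := bounded_linear_dual ys_bl.
have [_ [y _ <-] bfy] := ereal_sup_gt bfs.
case fy: (f y) bfy (f_proper.1 y) => [t| |] //= bfy _.
rewrite -EFinB lte_fin in bfy.
have := conj_fun_le_minorant linys ys_minor; have := conj_fun_neq_ninfty ys.
have := h_le y ys dys; rewrite fy.
case: (conj_fun f ys) => [g| |] //= hle _; rewrite lee_fin => g_le.
apply: le_trans (_ : (xs y + ys x)%:E - h y ys <= _); last first.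
  by apply: ereal_sup_ubound; exists y, ys.
apply: le_trans (_ : (xs y + ys x)%:E - (t + g)%:E <= _).
  by rewrite -EFinB lee_fin; lra.
by rewrite leeD2l // leeN2 EFinD.
Qed.

End Conjugate.

Theorem lemma4p1 (R : realType) (X : completeNormedModType R)
  (f : X -> \bar R) (h : X -> (X -> R) -> \bar R) :
  reflexive_space X ->
  proper_fun f -> convex_fun f -> lsc_fun f ->
  fitzfam (subdiff f) h ->
  (forall x xs, is_dual xs -> h x xs <= f x + conj_fun f xs) ->
  forall (x : X) (xs : X -> R), is_dual xs ->
    h x xs + conj_fun2 h xs x >= (xs x)%:E + f x + conj_fun f xs.
Proof.
move=> _ f_proper f_convex f_lsc [_ [_ [h_ge _]]] h_le x xs dxs.
rewrite -addeA; apply: leeD; first exact: h_ge.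
exact: fenchel_sum_le_conj_fun2.
Qed.
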